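(* (1) If $0<t<7$, $t\ne1$, $0<u<\mu_A(t)$ and $u\ne\frac{3(t-1)^2(t+2)}{2t+1}$, then $\mathfrak{e}^A_{t,u}(a^2,b^2,c^2)\notin\Sigma_{3,10}$. (2) If $t>2$, $\mu_B(t)<u<1$ and $b^B_1(t,\omega(u))\ne0$, where $b^B_1(t,w)=(2t+1)w-t(t-4)$, then $\mathfrak{e}^B_{t,u}(a^2,b^2,c^2)\notin\Sigma_{3,10}$.
   Context: Let $a,b,c$ be variables. For nonnegative integers $m,n$ put $S_{m,n}=a^mb^n+b^mc^n+c^ma^n$, $S_n=S_{n,0}=a^n+b^n+c^n$, $T_{m,n}=S_{m,n}+S_{n,m}$, $U=abc$ (so $S_{1,1}=ab+bc+ca$). Put $s_0=S_5-US_{1,1}$, $s_1=T_{4,1}-2US_{1,1}$, $s_2=T_{3,2}-2US_{1,1}$, $s_3=US_2-US_{1,1}$, $s_4=US_{1,1}$. $\Sigma_{3,10}$ denotes the cone of real ternary forms of degree 10 that are sums of squares of real ternary quintic forms. Auxiliary functions: $\mu_L(t)=9(t-1)^2$, $\mu_H(t)=(t+2)(7-t)$, $\mu_A(t)=\min\{\mu_L(t),\mu_H(t)\}$, $\mu_R(t)=2-t^2+t\sqrt{(t-1)(t+2)}$, $\mu_B(t)=\tfrac12\big(\mu_R(t)-\sqrt{\mu_R(t)^2-4}\big)$ (for $t\ge2$), $\omega(u)=u+\frac1u-2$. Family A: for $u>0$, $\mathfrak{e}^A_{t,u}=s_0+\sum_{i=1}^4p^A_i(t,u)s_i$ where $p^A_1=\dfrac{u^2-(t+2)(5t^2+t+9)u+9(t-1)^2(t+2)^2}{(5t+1)(t+2)u}$,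 $p^A_2=\dfrac{-t^2u^3+(t-1)(7t^3-t^2+11t+1)u^2+(t+2)(17t^5-25t^4+199t^3-59t^2+76t+8)u+9(t-1)^4(t+2)^2(t^2-12t-1)}{(5t+1)^3(t+2)u}$, $p^A_3=\dfrac{(2t^3+4t^2+5t+1)u^3-2(t+2)(7t^4+42t^3+37t^2+48t+10)u^2+(t+2)^2(91t^5+125t^4+682t^3+182t^2+523t+125)u-18(t-1)^2(t+2)^3(t^4+36t^3+34t^2+60t+13)}{(t+2)^2(5t+1)^3u}$, $p^A_4=\dfrac{(t-1)^3(6t^2+6t-12+u)^3}{(t+2)^2(5t+1)^3u}$. Family B: with $p^B_1(t,w)=-2w-3$, $p^B_2(t,w)=w^2+2w+2$, $p^B_3(t,w)=-\frac{2t^3+4t^2+5t+1}{t^2(t+2)}w^2+\frac{2(4t^2+5t+3)}{t+2}w-\frac{3t^3-7t^2-12t-8}{t+2}$, $p^B_4(t,w)=\frac{(t-1)^3(-w^2-2t^2w+t^2(t-2))}{t^2(t+2)}$, put $\mathfrak{e}^B_{t,u}=s_0+\sum_{i=1}^4p^B_i(t,\omega(u))s_i$. *)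

From Stdlib Require Import Reals List.
Open Scope R_scope.

Definition Smn (m n : nat) (a b c : R) : R := a^m*b^n + b^m*c^n + c^m*a^n.
Definition Sn (n : nat) (a b c : R) : R := Smn n 0 a b c.
Definition Tmn (m n : nat) (a b c : R) : R := Smn m n a b c + Smn n m a b c.
Definition Uabc (a b c : R) : R := a*b*c.

Definition s0 (a b c : R) : R := Sn 5 a b c - Uabc a b c * Smn 1 1 a b c.
Definition s1 (a b c : R) : R := Tmn 4 1 a b c - 2 * Uabc a b c * Smn 1 1 a b c.
Definition s2 (a b c : R) : R := Tmn 3 2 a b c - 2 * Uabc a b c * Smn 1 1 a b c.
Definition s3 (a b c : R) : R := Uabc a b c * Sn 2 a b c - Uabc a b c * Smn 1 1 a b c.
Definition s4 (a b c : R) : R := Uabc a b c * Smn 1 1 a b c.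

Definition muL (t : R) : R := 9*(t-1)^2.
Definition muH (t : R) : R := (t+2)*(7-t).
Definition muA (t : R) : R := Rmin (muL t) (muH t).
Definition muR (t : R) : R := 2 - t^2 + t * sqrt ((t-1)*(t+2)).
Definition muB (t : R) : R := (muR t - sqrt ((muR t)^2 - 4)) / 2.
Definition omega (u : R) : R := u + 1/u - 2.

Definition pA1 (t u : R) : R :=
  (u^2 - (t+2)*(5*t^2+t+9)*u + 9*(t-1)^2*(t+2)^2) / ((5*t+1)*(t+2)*u).
Definition pA2 (t u : R) : R :=
  (- t^2*u^3 + (t-1)*(7*t^3 - t^2 + 11*t + 1)*u^2
   + (t+2)*(17*t^5 - 25*t^4 + 199*t^3 - 59*t^2 + 76*t + 8)*u
   + 9*(t-1)^4*(t+2)^2*(t^2 - 12*t - 1)) / ((5*t+1)^3*(t+2)*u).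
Definition pA3 (t u : R) : R :=
  ((2*t^3 + 4*t^2 + 5*t + 1)*u^3
   - 2*(t+2)*(7*t^4 + 42*t^3 + 37*t^2 + 48*t + 10)*u^2
   + (t+2)^2*(91*t^5 + 125*t^4 + 682*t^3 + 182*t^2 + 523*t + 125)*u
   - 18*(t-1)^2*(t+2)^3*(t^4 + 36*t^3 + 34*t^2 + 60*t + 13))
  / ((t+2)^2*(5*t+1)^3*u).
Definition pA4 (t u : R) : R :=
  ((t-1)^3*(6*t^2 + 6*t - 12 + u)^3) / ((t+2)^2*(5*t+1)^3*u).

Definition eA (t u : R) (a b c : R) : R :=
  s0 a b c + pA1 t u * s1 a b c + pA2 t u * s2 a b c
  + pA3 t u * s3 a b c + pA4 t u * s4 a b c.

Definition pB1 (t w : R) : R := -2*w - 3.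
Definition pB2 (t w : R) : R := w^2 + 2*w + 2.
Definition pB3 (t w : R) : R :=
  - (2*t^3 + 4*t^2 + 5*t + 1) / (t^2*(t+2)) * w^2
  + 2*(4*t^2 + 5*t + 3) / (t+2) * w
  - (3*t^3 - 7*t^2 - 12*t - 8) / (t+2).
Definition pB4 (t w : R) : R :=
  ((t-1)^3 * (- w^2 - 2*t^2*w + t^2*(t-2))) / (t^2*(t+2)).

Definition eB (t u : R) (a b c : R) : R :=
  let w := omega u in
  s0 a b c + pB1 t w * s1 a b c + pB2 t w * s2 a b c
  + pB3 t w * s3 a b c + pB4 t w * s4 a b c.

Definition bB1 (t w : R) : R := (2*t+1)*w - t*(t-4).

Definition quintic (q : nat -> nat -> R) (a b c : R) : R :=
  sum_f_R0 (fun i =>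
    sum_f_R0 (fun j => q i j * a^i * b^j * c^(5 - i - j)) (5 - i)) 5.

(* Sigma_{3,10}: ternary forms (of degree 10) that are sums of squares of
   real ternary quintic forms.  Equality of real polynomials is equality
   as functions on R^3. *)
Definition in_Sigma_3_10 (f : R -> R -> R -> R) : Prop :=
  exists qs : list (nat -> nat -> R),
    forall a b c : R,
      f a b c = fold_right (fun q acc => (quintic q a b c)^2 + acc) 0 qs.

From Stdlib Require Import Reals Lra Lia Psatz List.
Open Scope R_scope.

(* If e(a^2,b^2,c^2) = sum_k q_k^2, every quintic q_k vanishes at every real zero
   of e(a^2,b^2,c^2), and so at all its sign changes.  Grouping the monomials of q_k
   by the parities of their exponents, q_k = a Q_a(a^2,b^2,c^2) + b Q_b + c Q_c
   + abc L with quadratic forms Q_a, Q_b, Q_c and a linear form L, and sign changes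
   separate the four parts: each vanishes at the nonnegative zeros (x,y,z) of e
   whose relevant coordinates are positive.
   For family A, e vanishes at the permutations of (t,1,1) and of (r,1,1) for a
   second root r; these force Q_a, Q_b, Q_c and L, hence every q_k, to vanish at
   (1,1,1), whereas e(1,1,1) = 3 p^A_4 > 0.
   For family B, the zeros at the permutations of (t,1,1) and at (1,u,0), (1,0,u),
   (u,1,0), (u,0,1) force the coefficient of a^5 in every q_k to vanish, whereas
   e(1,0,0) = 1. *)

Definition sum_sq {A : Type} (f : A -> R) (l : list A) : R :=
  fold_right (fun x acc => f x ^ 2 + acc) 0 l.

Lemma sum_sq_nonneg {A : Type} (f : A -> R) (l : list A) : 0 <= sum_sq f l.
Proof. unfold sum_sq; induction l as [|x l IH]; cbn [fold_right]; nra. Qed.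

Lemma sum_sq_eq0 {A : Type} (f : A -> R) (l : list A) :
  sum_sq f l = 0 <-> forall x, In x l -> f x = 0.
Proof.
  induction l as [|y l IH].
  - split; [intros _ x [] | reflexivity].
  - pose proof (sum_sq_nonneg f l) as Hl.
    unfold sum_sq in *; cbn [fold_right]; split.
    + intros H x [<- | Hx]; [nra |].
      apply IH; [nra | exact Hx].
    + intros H.
      rewrite (H y (or_introl eq_refl)), (proj2 IH); [ring |].
      intros x Hx; apply H; right; exact Hx.
Qed.

Definition quad_form (c1 c2 c3 c4 c5 c6 x y z : R) : R :=
  c1*x^2 + c2*y^2 + c3*z^2 + c4*x*y + c5*y*z + c6*z*x.

Definition lin_form (c1 c2 c3 x y z : R) : R := c1*x + c2*y + c3*z.

Section ParityParts.
Local Open Scope nat_scope.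

Definition quintic_a (q : nat -> nat -> R) :=
  quad_form (q 5 0) (q 1 4) (q 1 0) (q 3 2) (q 1 2) (q 3 0).
Definition quintic_b (q : nat -> nat -> R) :=
  quad_form (q 4 1) (q 0 5) (q 0 1) (q 2 3) (q 0 3) (q 2 1).
Definition quintic_c (q : nat -> nat -> R) :=
  quad_form (q 4 0) (q 0 4) (q 0 0) (q 2 2) (q 0 2) (q 2 0).
Definition quintic_abc (q : nat -> nat -> R) :=
  lin_form (q 3 1) (q 1 3) (q 1 1).

End ParityParts.

Lemma quintic_parity_decomp q a b c :
  quintic q a b c =
  a * quintic_a q (a^2) (b^2) (c^2) + b * quintic_b q (a^2) (b^2) (c^2)
  + c * quintic_c q (a^2) (b^2) (c^2) + a*b*c * quintic_abc q (a^2) (b^2) (c^2).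
Proof.
  unfold quintic, quintic_a, quintic_b, quintic_c, quintic_abc, quad_form, lin_form.
  simpl; ring.
Qed.

Lemma quintic_at_111 q :
  quintic q 1 1 1 =
  quintic_a q 1 1 1 + quintic_b q 1 1 1 + quintic_c q 1 1 1 + quintic_abc q 1 1 1.
Proof. rewrite quintic_parity_decomp, pow1; ring. Qed.

Lemma quintic_at_100 q : quintic q 1 0 0 = quintic_a q 1 0 0.
Proof.
  unfold quintic, quintic_a, quad_form.
  simpl; ring.
Qed.

Lemma quintic_parts_eq0 q a b c :
  quintic q a b c = 0 -> quintic q (-a) b c = 0 ->
  quintic q a (-b) c = 0 -> quintic q a b (-c) = 0 ->
  a * quintic_a q (a^2) (b^2) (c^2) = 0 /\ b * quintic_b q (a^2) (b^2) (c^2) = 0 /\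
  c * quintic_c q (a^2) (b^2) (c^2) = 0 /\
  a*b*c * quintic_abc q (a^2) (b^2) (c^2) = 0.
Proof.
  rewrite !quintic_parity_decomp.
  replace ((-a)^2) with (a^2) by ring.
  replace ((-b)^2) with (b^2) by ring.
  replace ((-c)^2) with (c^2) by ring.
  intros; repeat split; lra.
Qed.

Lemma sos_zero_parts (F : R -> R -> R -> R) (qs : list (nat -> nat -> R)) q x y z :
  (forall a b c, F (a^2) (b^2) (c^2) = sum_sq (fun q => quintic q a b c) qs) ->
  In q qs -> 0 <= x -> 0 <= y -> 0 <= z -> F x y z = 0 ->
  (0 < x -> quintic_a q x y z = 0) /\ (0 < y -> quintic_b q x y z = 0) /\
  (0 < z -> quintic_c q x y z = 0) /\
  (0 < x -> 0 < y -> 0 < z -> quintic_abc q x y z = 0).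
Proof.
  intros HF Hq Hx Hy Hz HFxyz.
  assert (Hvanish : forall a b c, a^2 = x -> b^2 = y -> c^2 = z -> quintic q a b c = 0).
  { intros a b c <- <- <-.
    apply (proj1 (sum_sq_eq0 (fun q => quintic q a b c) qs)); [| exact Hq].
    rewrite <- HF; exact HFxyz. }
  pose proof (pow2_sqrt x Hx) as Ex.
  pose proof (pow2_sqrt y Hy) as Ey.
  pose proof (pow2_sqrt z Hz) as Ez.
  destruct (quintic_parts_eq0 q (sqrt x) (sqrt y) (sqrt z)) as (Ha & Hb & Hc & Habc);
    try (apply Hvanish; lra).
  rewrite Ex, Ey, Ez in *.
  repeat split; intros.
  - pose proof (sqrt_lt_R0 x H); nra.
  - pose proof (sqrt_lt_R0 y H); nra.
  - pose proof (sqrt_lt_R0 z H); nra.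
  - assert (0 < sqrt x * sqrt y * sqrt z)
      by (repeat apply Rmult_lt_0_compat; apply sqrt_lt_R0; assumption).
    nra.
Qed.

Definition vanishes_on_perms (f : R -> R -> R -> R) (x : R) : Prop :=
  f x 1 1 = 0 /\ f 1 x 1 = 0 /\ f 1 1 x = 0.

Lemma sos_parts_vanish_on_perms (F : R -> R -> R -> R) qs q x :
  (forall a b c, F (a^2) (b^2) (c^2) = sum_sq (fun q => quintic q a b c) qs) ->
  In q qs -> 0 < x -> vanishes_on_perms F x ->
  vanishes_on_perms (quintic_a q) x /\ vanishes_on_perms (quintic_b q) x /\
  vanishes_on_perms (quintic_c q) x /\ vanishes_on_perms (quintic_abc q) x.
Proof.
  intros HF Hq Hx (H1 & H2 & H3).
  destruct (sos_zero_parts F qs q x 1 1 HF Hq) as (A1 & B1 & C1 & L1); try lra.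
  destruct (sos_zero_parts F qs q 1 x 1 HF Hq) as (A2 & B2 & C2 & L2); try lra.
  destruct (sos_zero_parts F qs q 1 1 x HF Hq) as (A3 & B3 & C3 & L3); try lra.
  unfold vanishes_on_perms; repeat split; auto with real.
Qed.

(* Summed over the permutations of (x,1,1), a quadratic form equals
   A (x^2 + 2) + B (2x + 1) with A = c1+c2+c3 and B = c4+c5+c6, while its value
   at (1,1,1) is A + B; for x = t, r this linear system in A, B has determinant
   (t-r)(2tr+t+r-4). *)
Lemma quad_form_zero_111 c1 c2 c3 c4 c5 c6 t r :
  (t - r) * (2*t*r + t + r - 4) <> 0 ->
  vanishes_on_perms (quad_form c1 c2 c3 c4 c5 c6) t ->
  vanishes_on_perms (quad_form c1 c2 c3 c4 c5 c6) r ->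
  quad_form c1 c2 c3 c4 c5 c6 1 1 1 = 0.
Proof.
  intros HD (Ht1 & Ht2 & Ht3) (Hr1 & Hr2 & Hr3).
  set (Q := quad_form c1 c2 c3 c4 c5 c6) in *.
  assert (E : Q 1 1 1 * ((t - r) * (2*t*r + t + r - 4)) =
    - (r-1)^2 * (Q t 1 1 + Q 1 t 1 + Q 1 1 t)
    + (t-1)^2 * (Q r 1 1 + Q 1 r 1 + Q 1 1 r))
    by (unfold Q, quad_form; ring).
  rewrite Ht1, Ht2, Ht3, Hr1, Hr2, Hr3 in E.
  apply (Rmult_eq_reg_r ((t - r) * (2*t*r + t + r - 4))); [lra | exact HD].
Qed.

Lemma lin_form_zero_111 c1 c2 c3 t :
  t + 2 <> 0 -> vanishes_on_perms (lin_form c1 c2 c3) t -> lin_form c1 c2 c3 1 1 1 = 0.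
Proof.
  intros HD (H1 & H2 & H3).
  set (L := lin_form c1 c2 c3) in *.
  assert (E : L 1 1 1 * (t + 2) = L t 1 1 + L 1 t 1 + L 1 1 t) by (unfold L, lin_form; ring).
  rewrite H1, H2, H3 in E.
  apply (Rmult_eq_reg_r (t + 2)); [lra | exact HD].
Qed.

Lemma quad_form_zero_100 c1 c2 c3 c4 c5 c6 t u :
  (t - 1) * (1 - u^2) * ((2*t+1)*(1-u)^2 - u*t*(t-4)) <> 0 ->
  vanishes_on_perms (quad_form c1 c2 c3 c4 c5 c6) t ->
  quad_form c1 c2 c3 c4 c5 c6 1 u 0 = 0 -> quad_form c1 c2 c3 c4 c5 c6 1 0 u = 0 ->
  quad_form c1 c2 c3 c4 c5 c6 u 1 0 = 0 -> quad_form c1 c2 c3 c4 c5 c6 u 0 1 = 0 ->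
  quad_form c1 c2 c3 c4 c5 c6 1 0 0 = 0.
Proof.
  intros HD (Ht1 & Ht2 & Ht3) H4 H5 H6 H7.
  set (Q := quad_form c1 c2 c3 c4 c5 c6) in *.
  assert (E : Q 1 0 0 * (2 * ((t - 1) * (1 - u^2) * ((2*t+1)*(1-u)^2 - u*t*(t-4)))) =
    (u*(u*u-1)) * (2*t*Q t 1 1 - (Q 1 t 1 + Q 1 1 t))
    + (t-1) * (((t-1)*u + 2*t + 1) * (Q 1 u 0 + Q 1 0 u)
               + (-(t-1)*u - (2*t+1)*u*u) * (Q u 1 0 + Q u 0 1)))
    by (unfold Q, quad_form; ring).
  rewrite Ht1, Ht2, Ht3, H4, H5, H6, H7 in E.
  apply (Rmult_eq_reg_r (2 * ((t - 1) * (1 - u^2) * ((2*t+1)*(1-u)^2 - u*t*(t-4)))));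
    [lra | apply Rmult_integral_contrapositive_currified; [lra | exact HD]].
Qed.

Definition rA (t u : R) : R := ((t+2)*(7-t) - u) / ((5*t+1)*(t+2)).

Lemma eA_vanishes_on_perms t u x :
  0 < t -> 0 < u -> x = t \/ x = rA t u -> vanishes_on_perms (eA t u) x.
Proof.
  intros Ht Hu Hx.
  unfold vanishes_on_perms, eA, s0, s1, s2, s3, s4, Sn, Tmn, Smn, Uabc,
    pA1, pA2, pA3, pA4.
  destruct Hx as [-> | ->]; unfold rA; repeat split; field; repeat split; lra.
Qed.

Lemma eA_111 t u : eA t u 1 1 1 = 3 * pA4 t u.
Proof. unfold eA, s0, s1, s2, s3, s4, Sn, Tmn, Smn, Uabc; ring. Qed.

Lemma rA_pos t u : 0 < t -> u < (t+2)*(7-t) -> 0 < rA t u.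
Proof. intros; unfold rA; apply Rdiv_lt_0_compat; nra. Qed.

Lemma rA_det_neq0 t u :
  0 < t -> t <> 1 -> 0 < u -> u < 9*(t-1)^2 -> u <> 3*(t-1)^2*(t+2)/(2*t+1) ->
  (t - rA t u) * (2*t*rA t u + t + rA t u - 4) <> 0.
Proof.
  intros Ht Ht1 Hu HuL Hu3.
  replace ((t - rA t u) * (2*t*rA t u + t + rA t u - 4)) with
    (((t+2)*(5*t+7)*(t-1) + u) * (3*(t-1)^2*(t+2) - (2*t+1)*u)
     / ((5*t+1)*(t+2))^2) by (unfold rA; field; lra).
  apply Rmult_integral_contrapositive_currified.
  - apply Rmult_integral_contrapositive_currified.
    + destruct (Rlt_or_le t 1).
      * assert (9*(1-t) <= (t+2)*(5*t+7)) by nra. nra.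
      * assert (1 < t) by lra. nra.
    + intro E; apply Hu3.
      replace (3*(t-1)^2*(t+2)) with ((2*t+1)*u) by lra.
      field; lra.
  - apply Rinv_neq_0_compat, pow_nonzero; nra.
Qed.

Lemma pA4_pos t u : 0 < t -> t <> 1 -> 0 < u -> u < 9*(t-1)^2 -> 0 < pA4 t u.
Proof.
  intros Ht Ht1 Hu HuL.
  assert (P : 0 < (t-1)*(6*t^2 + 6*t - 12 + u)).
  { destruct (Rlt_or_le t 1).
    - assert (6*t^2 + 6*t - 12 + u < 0) by nra. nra.
    - assert (1 < t) by lra. nra. }
  unfold pA4.
  replace ((t-1)^3*(6*t^2 + 6*t - 12 + u)^3) with (((t-1)*(6*t^2 + 6*t - 12 + u))^3) by ring.
  apply Rdiv_lt_0_compat; [apply pow_lt; exact P |].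
  repeat apply Rmult_lt_0_compat; try (apply pow_lt); lra.
Qed.

Lemma eA_not_sos t u :
  0 < t -> t < 7 -> t <> 1 -> 0 < u -> u < muA t ->
  u <> 3*(t-1)^2*(t+2)/(2*t+1) ->
  ~ in_Sigma_3_10 (fun a b c => eA t u (a^2) (b^2) (c^2)).
Proof.
  intros Ht0 Ht7 Ht1 Hu HuA Hu3 [qs HF].
  assert (HuL : u < 9*(t-1)^2) by (pose proof (Rmin_l (muL t) (muH t)); unfold muA, muL in *; lra).
  assert (HuH : u < (t+2)*(7-t)) by (pose proof (Rmin_r (muL t) (muH t)); unfold muA, muH in *; lra).
  set (r := rA t u).
  assert (Hr : 0 < r) by (apply rA_pos; lra).
  assert (HD := rA_det_neq0 t u Ht0 Ht1 Hu HuL Hu3).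
  assert (Hq111 : forall q, In q qs -> quintic q 1 1 1 = 0).
  { intros q Hq.
    destruct (sos_parts_vanish_on_perms _ qs q t HF Hq Ht0
                (eA_vanishes_on_perms t u t Ht0 Hu (or_introl eq_refl)))
      as (Ha & Hb & Hc & Habc).
    destruct (sos_parts_vanish_on_perms _ qs q r HF Hq Hr
                (eA_vanishes_on_perms t u r Ht0 Hu (or_intror eq_refl)))
      as (Ha' & Hb' & Hc' & _).
    rewrite quintic_at_111.
    unfold quintic_a, quintic_b, quintic_c, quintic_abc in *.
    rewrite (quad_form_zero_111 _ _ _ _ _ _ t r HD Ha Ha'),
      (quad_form_zero_111 _ _ _ _ _ _ t r HD Hb Hb'),
      (quad_form_zero_111 _ _ _ _ _ _ t r HD Hc Hc'),
      (lin_form_zero_111 _ _ _ t ltac:(lra) Habc).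
    ring. }
  assert (E : eA t u (1^2) (1^2) (1^2) = 0)
    by exact (eq_trans (HF 1 1 1) (proj2 (sum_sq_eq0 _ qs) Hq111)).
  rewrite pow1, eA_111 in E.
  pose proof (pA4_pos t u Ht0 Ht1 Hu HuL); lra.
Qed.

Lemma eB_vanishes_on_perms t u : 0 < t -> 0 < u -> vanishes_on_perms (eB t u) t.
Proof.
  intros Ht Hu.
  unfold vanishes_on_perms, eB, omega, s0, s1, s2, s3, s4, Sn, Tmn, Smn, Uabc,
    pB1, pB2, pB3, pB4.
  repeat split; field; repeat split; nra.
Qed.

Lemma eB_boundary_zeros t u :
  0 < t -> 0 < u ->
  eB t u 1 u 0 = 0 /\ eB t u 1 0 u = 0 /\ eB t u u 1 0 = 0 /\ eB t u u 0 1 = 0.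
Proof.
  intros Ht Hu.
  unfold eB, omega, s0, s1, s2, s3, s4, Sn, Tmn, Smn, Uabc, pB1, pB2, pB3, pB4.
  repeat split; field; repeat split; nra.
Qed.

Lemma eB_100 t u : eB t u 1 0 0 = 1.
Proof. unfold eB, s0, s1, s2, s3, s4, Sn, Tmn, Smn, Uabc; ring. Qed.

Lemma muB_pos t : 2 < t -> 0 < muB t.
Proof.
  intros Ht.
  assert (Hs : t <= sqrt ((t-1)*(t+2))).
  { apply Rle_trans with (sqrt (t^2));
      [rewrite sqrt_pow2; lra | apply sqrt_le_1_alt; nra]. }
  assert (HR : 2 <= muR t) by (unfold muR; nra).
  unfold muB; set (m := muR t) in *.
  assert (Hsq := pow2_sqrt (m^2 - 4) ltac:(nra)).
  pose proof (sqrt_pos (m^2 - 4)).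
  assert (sqrt (m^2 - 4) < m) by nra.
  lra.
Qed.

Lemma bB1_omega t u : 0 < u -> (2*t+1)*(1-u)^2 - u*t*(t-4) = u * bB1 t (omega u).
Proof. intros; unfold bB1, omega; field; lra. Qed.

Lemma eB_not_sos t u :
  2 < t -> muB t < u -> u < 1 -> bB1 t (omega u) <> 0 ->
  ~ in_Sigma_3_10 (fun a b c => eB t u (a^2) (b^2) (c^2)).
Proof.
  intros Ht HuB Hu1 Hb [qs HF].
  pose proof (muB_pos t Ht).
  assert (Hu : 0 < u) by lra.
  assert (HD : (t - 1) * (1 - u^2) * ((2*t+1)*(1-u)^2 - u*t*(t-4)) <> 0).
  { rewrite bB1_omega by exact Hu.
    repeat apply Rmult_integral_contrapositive_currified; nra. }
  assert (Hq100 : forall q, In q qs -> quintic q 1 0 0 = 0).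
  { intros q Hq.
    assert (Ha : forall x y z, 0 < x -> 0 <= y -> 0 <= z -> eB t u x y z = 0 ->
                 quintic_a q x y z = 0)
      by (intros x y z Hx Hy Hz H0;
          apply (sos_zero_parts _ qs q x y z HF Hq); lra).
    destruct (eB_vanishes_on_perms t u ltac:(lra) Hu) as (Z1 & Z2 & Z3).
    destruct (eB_boundary_zeros t u ltac:(lra) Hu) as (Z4 & Z5 & Z6 & Z7).
    rewrite quintic_at_100.
    apply (quad_form_zero_100 _ _ _ _ _ _ t u HD);
      [repeat split | ..]; apply Ha; lra. }
  assert (E : eB t u (1^2) (0^2) (0^2) = 0)
    by exact (eq_trans (HF 1 0 0) (proj2 (sum_sq_eq0 _ qs) Hq100)).
  rewrite pow1, pow_i, eB_100 in E by lia.
  lra.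
Qed.

Theorem theorem4p26 :
  (forall t u : R,
     0 < t -> t < 7 -> t <> 1 -> 0 < u -> u < muA t ->
     u <> 3*(t-1)^2*(t+2)/(2*t+1) ->
     ~ in_Sigma_3_10 (fun a b c => eA t u (a^2) (b^2) (c^2)))
  /\
  (forall t u : R,
     2 < t -> muB t < u -> u < 1 -> bB1 t (omega u) <> 0 ->
     ~ in_Sigma_3_10 (fun a b c => eB t u (a^2) (b^2) (c^2))).
Proof. split; [exact eA_not_sos | exact eB_not_sos]. Qed.
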